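(* Let $0\to N\xrightarrow{i} G\xrightarrow{p} Q\to 1$ be a short exact sequence of groups with $N$ abelian (groups are written additively, but $G$ and $Q$ need not be abelian; we identify $N$ with $i(N)$). Let $End^Q_N(G)$ be the set of endomorphisms $\alpha:G\to G$ with $\alpha(N)\subseteq N$ and $p\circ\alpha=p$, and let $End^{N,Q}(G)\subseteq End^Q_N(G)$ be the subset of those $\alpha$ that moreover satisfy $\alpha|_N=\mathrm{id}_N$. Let $End_Q(N)$ be the ring of $Q$-module endomorphisms of $N$, and let $\rho:End^Q_N(G)\to End_Q(N)$ be $\rho(\alpha)=\alpha|_N$. Then: (1) The operations $$(\alpha_1\boxplus\alpha_2)(x):=\alpha_1(x)-x+\alpha_2(x),\qquad (\alpha_2\boxtimes\alpha_1)(x):=\alpha_2(\alpha_1(x))-\alpha_1(x)+x-\alpha_2(x)+x$$ ($\alpha_1,\alpha_2\in End^Q_N(G)$, $x\in G$) define an associative (not necessarily unital) ring structure on $End^Q_N(G)$, with addition $\boxplus$ and multiplication $\boxtimes$, whose zero element is $\mathrm{id}_G$. (2) $End^{N,Q}(G)$ is an ideal of this ring with $\alpha\boxtimes\beta=\mathrm{id}_G$ for all $\alpha,\beta\in End^{N,Q}(G)$ (a square zero ideal), and on $End^{N,Q}(G)$ the operation $\boxplus$ coincides with composition of endomorphisms. (3) $\rho$ is a ring homomorphism, and there is an exact sequence of abelian groups $$0\to End^{N,Q}(G)\to End^Q_N(G)\xrightarrow{\rho} End_Q(N)\xrightarrow{\eta} H^2(Q,N)\xrightarrow{p^*} H^2(G,N),$$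 where the first map is the inclusion, $\eta$ is the transgression map of the five-term exact sequence associated to the extension, and $p^*$ is inflation.
   Context: $N$ is a $Q$-module (and a $G$-module) via conjugation in $G$: for $\bar y=p(y)\in Q$ and $n\in N$, $\bar y\cdot n=y+n-y$; this is well defined since $N$ is abelian. $End_Q(N)$ is a ring under pointwise addition and composition. $H^2(Q,N)$, $H^2(G,N)$ denote the usual group cohomology with these actions. *)

(* Groups G, Q : possibly infinite, non-abelian groups
   (mathcomp's [groupType] from boot/monoid.v, written multiplicatively:
   the paper's additive  x + y, -x, 0  are  x * y, x^-1, 1  here). *)
From HB Require Import structures.
From mathcomp Require Import all_boot all_algebra.
From Stdlib Require Import ClassicalEpsilon.

Set Implicit Arguments.
Unset Strict Implicit.
Unset Printing Implicit Defensive.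

Import GRing.Theory.
Local Open Scope ring_scope.

Section Defs.

Variables (G Q : groupType) (N : zmodType).

Definition is_ghom (H K : groupType) (f : H -> K) : Prop :=
  forall x y, f (x * y)%g = (f x * f y)%g.

Definition short_exact (i : N -> G) (p : G -> Q) : Prop :=
  [/\ forall a b, i (a + b) = (i a * i b)%g,
      injective i,
      is_ghom p,
      (forall q, exists y, p y = q) &
      (forall y, p y = 1%g <-> exists n, y = i n)].

(* a chosen preimage (used only for elements known to be in the image) *)
Definition preim (A B : Type) (a0 : A) (f : A -> B) (b : B) : A :=
  epsilon (inhabits a0) (fun a => f a = b).

Variables (i : N -> G) (p : G -> Q).

Definition iinv (x : G) : N := preim 0 i x.
Definition lift (q : Q) : G := preim 1%g p q.

Definition qact (q : Q) (n : N) : N := iinv (lift q * i n * (lift q)^-1)%g.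
Definition gact (y : G) (n : N) : N := qact (p y) n.

Definition EndQN (a : G -> G) : Prop :=
  [/\ is_ghom a, (forall n, exists m, a (i n) = i m) & (forall x, p (a x) = p x)].

Definition EndNQ (a : G -> G) : Prop := EndQN a /\ (forall n, a (i n) = i n).

Definition EndQ (f : N -> N) : Prop :=
  (forall a b, f (a + b) = f a + f b) /\ (forall q n, f (qact q n) = qact q (f n)).

Definition boxplus (a1 a2 : G -> G) : G -> G :=
  fun x => (a1 x * x^-1 * a2 x)%g.
Definition boxtimes (a2 a1 : G -> G) : G -> G :=
  fun x => (a2 (a1 x) * (a1 x)^-1 * x * (a2 x)^-1 * x)%g.

Definition rho (a : G -> G) : N -> N := fun n => iinv (a (i n)) - n.

End Defs.

Definition nonunital_ring_on (T : Type) (S : T -> Prop)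
    (add mul : T -> T -> T) (z : T) : Prop :=
  S z /\
  (forall a b, S a -> S b -> S (add a b)) /\
  (forall a b, S a -> S b -> S (mul a b)) /\
  (forall a, S a -> exists b, S b /\ add a b = z) /\
  (forall a b c, S a -> S b -> S c -> add a (add b c) = add (add a b) c) /\
  (forall a b, S a -> S b -> add a b = add b a) /\
  (forall a, S a -> add z a = a) /\
  (forall a b c, S a -> S b -> S c -> mul a (mul b c) = mul (mul a b) c) /\
  (forall a b c, S a -> S b -> S c ->
     mul a (add b c) = add (mul a b) (mul a c) /\
     mul (add a b) c = add (mul a c) (mul b c)).

Definition ideal_of (T : Type) (S I : T -> Prop)
    (add mul : T -> T -> T) (z : T) : Prop :=
  [/\ (forall a, I a -> S a),
      I z,
      (forall a b, I a -> I b -> I (add a b)),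
      (forall a, I a -> exists b, I b /\ add a b = z) &
      (forall a b, I a -> S b -> I (mul a b) /\ I (mul b a))].

Definition cocycle2 (H : groupType) (N : zmodType) (act : H -> N -> N)
    (z : H -> H -> N) : Prop :=
  forall h1 h2 h3,
    z h1 h2 + z (h1 * h2)%g h3 = act h1 (z h2 h3) + z h1 (h2 * h3)%g.

Definition coboundary2 (H : groupType) (N : zmodType) (act : H -> N -> N)
    (z : H -> H -> N) : Prop :=
  exists b : H -> N, forall h1 h2,
    z h1 h2 = act h1 (b h2) - b (h1 * h2)%g + b h1.

(* The factor set of the extension w.r.t. the section [lift]:
   c(q1,q2) = s(q1) + s(q2) - s(q1 q2) in N;  [c] in H^2(Q,N) is the
   extension class. *)
Definition ext_cocycle (G Q : groupType) (N : zmodType) (i : N -> G) (p : G -> Q)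
    (q1 q2 : Q) : N :=
  iinv i (lift p q1 * lift p q2 * (lift p (q1 * q2)%g)^-1)%g.

(* transgression eta : End_Q(N) -> H^2(Q,N), f |-> [f o c] (representative) *)
Definition eta_rep (G Q : groupType) (N : zmodType) (i : N -> G) (p : G -> Q)
    (f : N -> N) : Q -> Q -> N :=
  fun q1 q2 => f (ext_cocycle i p q1 q2).

Definition infl (G Q : groupType) (N : zmodType) (p : G -> Q)
    (z : Q -> Q -> N) : G -> G -> N :=
  fun y1 y2 => z (p y1) (p y2).

(* An element [a] of End^Q_N(G) is the same thing as a derivation [d : G -> N]
   (for the conjugation action), via [a x = i (d x) * x].  Under this
   dictionary [boxplus] is the pointwise sum of derivations, [boxtimes a b]
   corresponds to [d_a \o i \o d_b], [rho] is restriction to [N], and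
   End^{N,Q}(G) consists of the derivations vanishing on [N]; the ring and
   ideal axioms become identities between derivations.
   For exactness write every [y] as [i (ncoord y) * sec (p y)] for a
   set-theoretic section [sec] of [p].  The coboundary of the G-cochain
   [ncoord] is minus the inflated factor set [c], so inflation kills
   [f \o c].  If [d] is a derivation then [d \o i \o c] is the coboundary of
   [d \o sec]; conversely, if [f \o c] is the coboundary of [b], then
   [f \o ncoord + b \o p] is a derivation restricting to [f].  Finally, if
   the inflation of [z] is the coboundary of [e], then [z 1 1 - e \o i] is a
   module endomorphism [f] with [f \o c] cohomologous to [z]. *)

From Pilot Require Import Defs.
From mathcomp Require Import all_boot all_algebra.
From Stdlib Require Import ClassicalEpsilon FunctionalExtensionality.

Set Implicit Arguments.
Unset Strict Implicit.
Unset Printing Implicit Defensive.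

Import GRing.Theory.
Local Open Scope ring_scope.

Section AdditiveMaps.

Variables (N : zmodType) (f : N -> N).
Hypothesis fD : {morph f : a b / a + b}.

Lemma add_morph0 : f 0 = 0.
Proof. by apply: (addrI (f 0)); rewrite -fD !addr0. Qed.

Lemma add_morphN : {morph f : a / - a}.
Proof. by move=> a; apply: (addrI (f a)); rewrite -fD !subrr add_morph0. Qed.

Lemma add_morphB : {morph f : a b / a - b}.
Proof. by move=> a b; rewrite fD add_morphN. Qed.

End AdditiveMaps.

Section Cochains.

Variables (H : groupType) (N : zmodType) (act : H -> N -> N).
Hypothesis actD : forall h a b, act h (a + b) = act h a + act h b.

Definition cobound (b : H -> N) : H -> H -> N :=
  fun h1 h2 => act h1 (b h2) - b (h1 * h2)%g + b h1.

Lemma coboundD b1 b2 h1 h2 :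
  cobound (fun h => b1 h + b2 h) h1 h2 = cobound b1 h1 h2 + cobound b2 h1 h2.
Proof. by rewrite /cobound actD opprD [X in X + _ = _]addrACA [LHS]addrACA. Qed.

Lemma coboundN b h1 h2 : cobound (fun h => - b h) h1 h2 = - cobound b h1 h2.
Proof. by rewrite /cobound (add_morphN (actD _)) !opprD !opprK. Qed.

Lemma cobound_solve b h1 h2 k :
  cobound b h1 h2 = k -> b (h1 * h2)%g = act h1 (b h2) + b h1 - k.
Proof. by move=> <-; rewrite /cobound [_ - _ + b h1]addrAC opprB subrKC. Qed.

Lemma cocycle2_1l z h :
  act 1%g =1 id -> cocycle2 act z -> z 1%g h = z 1%g 1%g.
Proof.
by move=> act1 z_cocycle; have := z_cocycle 1%g 1%g h; rewrite !mul1g act1 => /addIr.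
Qed.

Lemma cocycle2_r1 z h : cocycle2 act z -> z h 1%g = act h (z 1%g 1%g).
Proof. by move=> z_cocycle; have := z_cocycle h 1%g 1%g; rewrite !mulg1 => /addIr. Qed.

Lemma cobound_comp (f : N -> N) b h1 h2 :
  {morph f : a b / a + b} -> (forall h n, f (act h n) = act h (f n)) ->
  f (cobound b h1 h2) = cobound (f \o b) h1 h2.
Proof. by move=> fD f_act; rewrite /cobound fD (add_morphB fD) f_act. Qed.

End Cochains.

Local Open Scope group_scope.

Ltac group_norm :=
  repeat progress rewrite ?invgM ?invgK ?mulgA ?mulgK ?mulgVK ?mulg1 ?mul1g
    ?invg1 ?mulgV ?mulVg.

Section Extension.

Variables (G Q : groupType) (N : zmodType) (i : N -> G) (p : G -> Q).
Hypothesis exact_ip : short_exact i p.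

Local Notation sec := (Defs.lift p).
Local Notation iinv := (Defs.iinv i).
Local Notation gact := (gact i p).
Local Notation qact := (qact i p).
Local Notation c := (ext_cocycle i p).

Lemma iD a b : i (a + b) = i a * i b. Proof. by case: exact_ip. Qed.
Lemma i_inj : injective i. Proof. by case: exact_ip. Qed.
Lemma pM x y : p (x * y) = p x * p y. Proof. by case: exact_ip => _ _ ->. Qed.
Lemma p_surj q : exists y, p y = q. Proof. by case: exact_ip. Qed.
Lemma ker_p y : p y = 1 <-> exists n, y = i n. Proof. by case: exact_ip. Qed.

Lemma i0 : i 0 = 1.
Proof. by apply: (mulgI (i 0)); rewrite -iD addr0 mulg1. Qed.

Lemma i_comm a b : i a * i b = i b * i a.
Proof. by rewrite -!iD addrC. Qed.

Lemma p1 : p 1 = 1.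
Proof. by apply: (mulgI (p 1)); rewrite -pM !mulg1. Qed.

Lemma pV x : p x^-1 = (p x)^-1.
Proof. by apply: (mulgI (p x)); rewrite -pM !mulgV p1. Qed.

Lemma p_i n : p (i n) = 1.
Proof. by apply/ker_p; exists n. Qed.

Lemma p_sec q : p (sec q) = q.
Proof. exact: (epsilon_spec (inhabits 1) (fun y => p y = q) (p_surj q)). Qed.

Lemma iinvK n : iinv (i n) = n.
Proof.
apply: i_inj; apply: (epsilon_spec (inhabits 0) (fun m => i m = i n)).
by exists n.
Qed.

Lemma iinvKV y : p y = 1 -> i (iinv y) = y.
Proof. by case/ker_p=> n ->; rewrite iinvK. Qed.

Lemma p_conj_i y n : p (y * i n * y^-1) = 1.
Proof. by rewrite !pM p_i pV mulg1 mulgV. Qed.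

(* [y] and [sec (p y)] differ by an element of the abelian group [i N], so
   they conjugate [i N] alike. *)
Lemma gactE y n : i (gact y n) = y * i n * y^-1.
Proof.
rewrite /Defs.gact /Defs.qact iinvKV ?p_conj_i //.
set s := sec (p y).
have /ker_p [m Em] : p (y * s^-1) = 1 by rewrite pM pV p_sec mulgV.
have /ker_p [k Ek] := p_conj_i s n.
have -> : y = i m * s by rewrite -Em mulgVK.
by rewrite invgM !mulgA -!(mulgA (i m)) Ek mulgA i_comm mulgK.
Qed.

Lemma gact_sec q : gact (sec q) = qact q.
Proof. by rewrite /Defs.gact p_sec. Qed.

Lemma qactE q n : i (qact q n) = sec q * i n * (sec q)^-1.
Proof. by rewrite -gact_sec gactE. Qed.

Lemma gactD y a b : gact y (a + b) = gact y a + gact y b.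
Proof. by apply: i_inj; rewrite !iD !gactE iD; group_norm. Qed.

Lemma gactM x y n : gact (x * y) n = gact x (gact y n).
Proof. by apply: i_inj; rewrite !gactE; group_norm. Qed.

Lemma gact_i m n : gact (i m) n = n.
Proof. by apply: i_inj; rewrite gactE i_comm mulgK. Qed.

Lemma gact1 n : gact 1 n = n.
Proof. by rewrite -i0 gact_i. Qed.

Lemma qactD q a b : qact q (a + b) = qact q a + qact q b.
Proof. by rewrite -gact_sec gactD. Qed.

Lemma qact1 n : qact 1 n = n.
Proof. by rewrite -gact_sec -[sec 1]iinvKV ?p_sec // gact_i. Qed.

Lemma ext_cocycleE q1 q2 : i (c q1 q2) = sec q1 * sec q2 * (sec (q1 * q2))^-1.
Proof. by rewrite iinvKV // !pM pV !p_sec mulgV. Qed.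

Lemma ext_cocycle_cocycle : cocycle2 qact c.
Proof.
move=> q1 q2 q3; apply: i_inj.
by rewrite !iD qactE !ext_cocycleE (mulgA q1); group_norm.
Qed.

Definition ncoord (y : G) : N := iinv (y * (sec (p y))^-1).

Lemma ncoordE y : i (ncoord y) = y * (sec (p y))^-1.
Proof. by rewrite iinvKV // pM pV p_sec mulgV. Qed.

Lemma ncoordM x y :
  ncoord (x * y) = ncoord x + gact x (ncoord y) + c (p x) (p y).
Proof.
apply: i_inj; rewrite !iD [i (gact _ _)]qactE ext_cocycleE !ncoordE pM.
by group_norm.
Qed.

Lemma ncoord_i n : ncoord (i n) = n + ncoord 1.
Proof. by apply: i_inj; rewrite iD !ncoordE p_i p1 mul1g. Qed.

Definition is_derivation (d : G -> N) :=
  forall x y, d (x * y) = d x + gact x (d y).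

Definition end_of_der (d : G -> N) : G -> G := fun x => i (d x) * x.

Section Derivation.

Variable d : G -> N.
Hypothesis der_d : is_derivation d.

Lemma derivation1 : d 1 = 0.
Proof. by apply: (addrI (d 1)); rewrite addr0 -{3}(mulg1 1) der_d gact1. Qed.

Lemma derivation_iD m n : d (i (m + n)) = d (i m) + d (i n).
Proof. by rewrite iD der_d gact_i. Qed.

Lemma derivation_gactV x : gact x (d x^-1) = - d x.
Proof. by apply: (addrI (d x)); rewrite -der_d mulgV derivation1 subrr. Qed.

Lemma derivation_ext_cocycle q1 q2 :
  d (i (c q1 q2)) = cobound qact (fun q => d (sec q)) q1 q2.
Proof.
have E : d (sec q1 * sec q2) = d (i (c q1 q2) * sec (q1 * q2)).
  by rewrite ext_cocycleE mulgVK.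
rewrite !der_d gact_i gact_sec in E.
by rewrite /cobound addrAC -(addrC (d (sec q1))) E addrK.
Qed.

Lemma derivation_gact x m : d (i (gact x m)) = gact x (d (i m)).
Proof.
by rewrite gactE !der_d gactM gact_i derivation_gactV addrAC subrr add0r.
Qed.

End Derivation.

Lemma derivation0 : is_derivation (fun _ => 0).
Proof. by move=> x y; rewrite (add_morph0 (gactD _)) addr0. Qed.

Lemma derivationD d1 d2 :
  is_derivation d1 -> is_derivation d2 -> is_derivation (fun x => d1 x + d2 x).
Proof. by move=> h1 h2 x y; rewrite h1 h2 gactD addrACA. Qed.

Lemma derivationN d : is_derivation d -> is_derivation (fun x => - d x).
Proof. by move=> h x y; rewrite h (add_morphN (gactD _)) opprD. Qed.

Lemma derivation_comp d2 d1 :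
  is_derivation d2 -> is_derivation d1 -> is_derivation (fun x => d2 (i (d1 x))).
Proof. by move=> h2 h1 x y; rewrite h1 derivation_iD // derivation_gact. Qed.

Lemma end_of_der_EndQN d : is_derivation d -> EndQN i p (end_of_der d).
Proof.
move=> der_d; split.
- by move=> x y; rewrite /end_of_der der_d iD gactE; group_norm.
- by move=> n; exists (d (i n) + n); rewrite /end_of_der iD.
- by move=> x; rewrite /end_of_der pM p_i mul1g.
Qed.

Lemma EndQN_derP a : EndQN i p a -> exists2 d, is_derivation d & a = end_of_der d.
Proof.
case=> a_morph _ pa; pose d x := iinv (a x * x^-1).
have dE x : i (d x) = a x * x^-1 by rewrite iinvKV // pM pV pa mulgV.
exists d; last first.
  by apply: functional_extensionality => x; rewrite /end_of_der dE mulgVK.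
by move=> x y; apply: i_inj; rewrite iD gactE !dE a_morph; group_norm.
Qed.

Lemma end_of_der_ext d1 d2 : d1 =1 d2 -> end_of_der d1 = end_of_der d2.
Proof. by move=> /functional_extensionality ->. Qed.

Lemma end_of_der0 : end_of_der (fun _ => 0) = id.
Proof. by apply: functional_extensionality => x; rewrite /end_of_der i0 mul1g. Qed.

Lemma boxplus_end_of_der d1 d2 :
  boxplus (end_of_der d1) (end_of_der d2) = end_of_der (fun x => d1 x + d2 x).
Proof.
apply: functional_extensionality => x.
by rewrite /boxplus /end_of_der iD; group_norm.
Qed.

Lemma boxtimes_end_of_der d2 d1 : is_derivation d2 ->
  boxtimes (end_of_der d2) (end_of_der d1) = end_of_der (fun x => d2 (i (d1 x))).
Proof.
move=> der_d2; apply: functional_extensionality => x.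
by rewrite /boxtimes /end_of_der der_d2 gact_i iD; group_norm.
Qed.

Lemma rho_end_of_der d : rho i (end_of_der d) = fun n => d (i n).
Proof.
apply: functional_extensionality => n.
by rewrite /rho /end_of_der -iD iinvK addrK.
Qed.

Lemma EndNQ_end_of_der d : is_derivation d ->
  EndNQ i p (end_of_der d) <-> forall n, d (i n) = 0.
Proof.
move=> der_d; split=> [[_ fix_N] n | d_N].
  by apply: i_inj; apply: (mulIg (i n)); rewrite i0 mul1g -[RHS]fix_N.
by split=> [|n]; [exact: end_of_der_EndQN | rewrite /end_of_der d_N i0 mul1g].
Qed.

Lemma EndQN_ring : nonunital_ring_on (EndQN i p) (@boxplus G) (@boxtimes G) id.
Proof.
rewrite /nonunital_ring_on -end_of_der0.
split; first exact/end_of_der_EndQN/derivation0.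
split=> [_ _ /EndQN_derP[d1 h1 ->] /EndQN_derP[d2 h2 ->] | ].
  by rewrite boxplus_end_of_der; apply/end_of_der_EndQN/derivationD.
split=> [_ _ /EndQN_derP[d1 h1 ->] /EndQN_derP[d2 h2 ->] | ].
  by rewrite boxtimes_end_of_der //; apply/end_of_der_EndQN/derivation_comp.
split=> [_ /EndQN_derP[d h ->] | ].
  exists (end_of_der (fun x => - d x)).
  split; first exact/end_of_der_EndQN/derivationN.
  by rewrite boxplus_end_of_der; apply: end_of_der_ext => x; rewrite subrr.
split=> [_ _ _ /EndQN_derP[d1 _ ->] /EndQN_derP[d2 _ ->] /EndQN_derP[d3 _ ->] | ].
  by rewrite !boxplus_end_of_der; apply: end_of_der_ext => x; rewrite addrA.
split=> [_ _ /EndQN_derP[d1 _ ->] /EndQN_derP[d2 _ ->] | ].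
  by rewrite !boxplus_end_of_der; apply: end_of_der_ext => x; rewrite addrC.
split=> [_ /EndQN_derP[d _ ->] | ].
  by rewrite boxplus_end_of_der; apply: end_of_der_ext => x; rewrite add0r.
split=> _ _ _ /EndQN_derP[d1 h1 ->] /EndQN_derP[d2 h2 ->] /EndQN_derP[d3 _ ->].
  by rewrite !boxtimes_end_of_der //; apply: derivation_comp.
rewrite !boxplus_end_of_der !boxtimes_end_of_der //; last exact: derivationD.
rewrite !boxplus_end_of_der; split=> //.
by apply: end_of_der_ext => x; apply: derivation_iD.
Qed.

Lemma EndNQ_derP a : EndNQ i p a ->
  exists2 d, is_derivation d & a = end_of_der d /\ forall n, d (i n) = 0.
Proof.
move=> Ea; have [/EndQN_derP [d der_d Ed] _] := Ea.
by exists d => //; split=> //; rewrite -(EndNQ_end_of_der der_d) -Ed.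
Qed.

Lemma EndNQ_ideal : ideal_of (EndQN i p) (EndNQ i p) (@boxplus G) (@boxtimes G) id.
Proof.
rewrite -end_of_der0; split=> [_ [] // | | | | ].
- by apply/EndNQ_end_of_der; [exact: derivation0 |].
- move=> _ _ /EndNQ_derP[d1 h1 [-> z1]] /EndNQ_derP[d2 h2 [-> z2]].
  rewrite boxplus_end_of_der; apply/EndNQ_end_of_der; first exact: derivationD.
  by move=> n; rewrite z1 z2 addr0.
- move=> _ /EndNQ_derP[d h [-> z]]; exists (end_of_der (fun x => - d x)); split.
    by apply/EndNQ_end_of_der; [exact: derivationN | move=> n; rewrite z oppr0].
  by rewrite boxplus_end_of_der; apply: end_of_der_ext => x; rewrite subrr.
- move=> _ _ /EndNQ_derP[d1 h1 [-> z1]] /EndQN_derP[d2 h2 ->].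
  rewrite !boxtimes_end_of_der //.
  split; apply/EndNQ_end_of_der; try exact: derivation_comp.
    by move=> n; rewrite z1.
  by move=> n; rewrite z1 i0 derivation1.
Qed.

Lemma EndNQ_boxtimes a b : EndNQ i p a -> EndNQ i p b -> boxtimes a b = id.
Proof.
move=> /EndNQ_derP[d1 h1 [-> z1]] /EndNQ_derP[d2 _ [-> _]].
rewrite boxtimes_end_of_der // -end_of_der0.
by apply: end_of_der_ext => x; apply: z1.
Qed.

Lemma EndNQ_boxplus a b : EndNQ i p a -> EndNQ i p b -> boxplus a b = a \o b.
Proof.
move=> /EndNQ_derP[d1 h1 [-> z1]] /EndNQ_derP[d2 _ [-> _]].
rewrite boxplus_end_of_der; apply: functional_extensionality => x.
by rewrite /end_of_der /= h1 z1 gact_i add0r iD mulgA.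
Qed.

Lemma rho_EndQ a : EndQN i p a -> EndQ i p (rho i a).
Proof.
move=> /EndQN_derP[d h ->]; rewrite rho_end_of_der.
by split=> [|q n]; [exact: derivation_iD | rewrite -!gact_sec derivation_gact].
Qed.

Lemma rho_boxplus a b : EndQN i p a -> EndQN i p b ->
  rho i (boxplus a b) = (fun n => rho i a n + rho i b n).
Proof.
move=> /EndQN_derP[d1 _ ->] /EndQN_derP[d2 _ ->].
by rewrite boxplus_end_of_der !rho_end_of_der.
Qed.

Lemma rho_boxtimes a b : EndQN i p a -> EndQN i p b ->
  rho i (boxtimes a b) = rho i a \o rho i b.
Proof.
move=> /EndQN_derP[d1 h1 ->] /EndQN_derP[d2 _ ->].
by rewrite boxtimes_end_of_der // !rho_end_of_der.
Qed.

Lemma rho_eq0 a : EndQN i p a -> rho i a = (fun _ => 0) <-> EndNQ i p a.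
Proof.
move=> /EndQN_derP[d h ->]; rewrite rho_end_of_der EndNQ_end_of_der //.
by split=> [/(congr1 (@^~ _)) | /functional_extensionality].
Qed.

Lemma cobound_ncoord x y : cobound gact ncoord x y = - c (p x) (p y).
Proof.
rewrite /cobound ncoordM (addrC (ncoord x)) -(addrA _ (ncoord x)) opprD addNKr.
by rewrite opprD addrAC addNr add0r.
Qed.

Lemma cobound_infl (b : Q -> N) x y :
  cobound gact (fun y => b (p y)) x y = cobound qact b (p x) (p y).
Proof. by rewrite /cobound pM. Qed.

Lemma derivation_cobound d :
  is_derivation d <-> forall x y, cobound gact d x y = 0.
Proof.
rewrite /cobound; split=> h x y.
  by rewrite h (addrC (d x)) opprD addrA subrr add0r addNr.
by move: (h x y); rewrite addrAC => /subr0_eq <-; apply: addrC.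
Qed.

Lemma eta_cocycle f : EndQ i p f -> cocycle2 qact (eta_rep i p f).
Proof.
by case=> fD f_act q1 q2 q3; rewrite /eta_rep -f_act -!fD ext_cocycle_cocycle.
Qed.

Lemma cobound_comp_ncoord f x y : EndQ i p f ->
  cobound gact (fun y => f (ncoord y)) x y = - f (c (p x) (p y)).
Proof.
case=> fD f_act; rewrite -(cobound_comp _ _ _ fD (fun h => f_act (p h))).
by rewrite cobound_ncoord (add_morphN fD).
Qed.

Lemma rho_image f : EndQ i p f ->
  (exists a, EndQN i p a /\ rho i a = f) <-> coboundary2 qact (eta_rep i p f).
Proof.
move=> EQf; split=> [[_ [/EndQN_derP[d der_d ->] <-]] | [b cob_b]].
  rewrite rho_end_of_der; exists (fun q => d (sec q)) => q1 q2.
  exact: derivation_ext_cocycle.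
pose d x := f (ncoord x) + b (p x).
have der_d : is_derivation d.
  apply/derivation_cobound => x y.
  have etaE q1 q2 : eta_rep i p f q1 q2 = cobound qact b q1 q2 := cob_b q1 q2.
  by rewrite (coboundD gactD) cobound_comp_ncoord // cobound_infl -etaE addNr.
exists (end_of_der d); split; first exact: end_of_der_EndQN.
rewrite rho_end_of_der; apply: functional_extensionality => n.
have [fD _] := EQf.
by rewrite /d ncoord_i fD p_i -p1 -addrA -/(d 1) derivation1 // addr0.
Qed.

Section InflationKernel.

Variables (z : Q -> Q -> N) (e : G -> N).
Hypothesis z_cocycle : cocycle2 qact z.
Hypothesis infl_z : forall x y, z (p x) (p y) = cobound gact e x y.

Local Notation k := (z 1 1).

Lemma e_iM m y : e (i m * y) = e (i m) + e y - k.
Proof.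
rewrite (cobound_solve (esym (infl_z _ _))) gact_i p_i.
by rewrite (cocycle2_1l _ qact1 z_cocycle) (addrC (e y)).
Qed.

Lemma e_Mi y m : e (y * i m) = gact y (e (i m)) + e y - gact y k.
Proof.
by rewrite (cobound_solve (esym (infl_z _ _))) p_i (cocycle2_r1 _ z_cocycle).
Qed.

(* By [e_iM], [e] is additive on [i N] up to the constant [k]. *)
Definition eta_preimage (n : N) : N := k - e (i n).

Lemma eta_preimage_EndQ : EndQ i p eta_preimage.
Proof.
rewrite /eta_preimage; split=> [m n | q n].
  by rewrite iD e_iM opprB addrA opprD addrACA.
have : e (i (qact q n) * sec q) = e (sec q * i n) by rewrite qactE mulgVK.
rewrite e_iM e_Mi gact_sec addrAC [RHS]addrAC => /addIr E.
by rewrite (add_morphB (qactD q)) -opprB E opprB.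
Qed.

Lemma eta_preimage_cohomologous q1 q2 : eta_rep i p eta_preimage q1 q2 - z q1 q2 =
  cobound qact (fun q => - e (sec q)) q1 q2.
Proof.
have Ec : e (sec q1 * sec q2) = e (i (c q1 q2)) + e (sec (q1 * q2)) - k.
  by rewrite -e_iM ext_cocycleE mulgVK.
rewrite (coboundN qactD) /eta_rep /eta_preimage.
have := infl_z (sec q1) (sec q2); rewrite !p_sec /cobound gact_sec Ec => ->.
move: k (e (i (c q1 q2))) (qact q1 (e (sec q2))) (e (sec (q1 * q2))) (e (sec q1)).
move=> K X B E A.
rewrite -[K - X]opprB -opprD; congr (- _).
rewrite [X + E - K]addrAC opprD addrA; congr (_ + _).
by rewrite addrCA addNKr.
Qed.

End InflationKernel.

Lemma infl_image z : cocycle2 qact z ->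
  (exists f, EndQ i p f /\
     coboundary2 qact (fun q1 q2 => eta_rep i p f q1 q2 - z q1 q2)) <->
  coboundary2 gact (infl p z).
Proof.
move=> z_cocycle; split=> [[f [EQf [b cob_b]]] | [e infl_z]].
  have bE q1 q2 : eta_rep i p f q1 q2 - z q1 q2 = cobound qact b q1 q2.
    exact: cob_b.
  pose b' y := - (f (ncoord y) + b (p y)).
  exists b' => x y; rewrite -/(cobound gact b' x y).
  rewrite (coboundN gactD) (coboundD gactD) cobound_comp_ncoord // cobound_infl -bE.
  by rewrite opprD opprK opprB subrKC.
exists (eta_preimage z e); split; first exact: eta_preimage_EndQ.
by exists (fun q => - e (sec q)) => q1 q2; apply: eta_preimage_cohomologous.
Qed.

End Extension.

Theorem theorem1 (G Q : groupType) (N : zmodType) (i : N -> G) (p : G -> Q) :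
  short_exact i p ->
  (* (1) ring structure on End^Q_N(G), zero = id_G *)
  nonunital_ring_on (EndQN i p) (@boxplus G) (@boxtimes G) id /\
  (* (2) End^{N,Q}(G) is a square-zero ideal, on which [+] is composition *)
  (ideal_of (EndQN i p) (EndNQ i p) (@boxplus G) (@boxtimes G) id /\
   (forall a b, EndNQ i p a -> EndNQ i p b -> boxtimes a b = id) /\
   (forall a b, EndNQ i p a -> EndNQ i p b -> boxplus a b = a \o b)) /\
  (* (3) rho is a ring homomorphism into End_Q(N) ... *)
  ((forall a, EndQN i p a -> EndQ i p (rho i a)) /\
   (forall a b, EndQN i p a -> EndQN i p b ->
      rho i (boxplus a b) = (fun n => rho i a n + rho i b n) /\
      rho i (boxtimes a b) = rho i a \o rho i b)) /\
  (* ... and the sequence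
     0 -> End^{N,Q}(G) -> End^Q_N(G) -rho-> End_Q(N) -eta-> H^2(Q,N) -p^*-> H^2(G,N)
     is exact *)
  ((forall a, EndQN i p a -> (rho i a = (fun _ => 0) <-> EndNQ i p a)) /\
   (forall f, EndQ i p f -> cocycle2 (qact i p) (eta_rep i p f)) /\
   (forall f, EndQ i p f ->
      ((exists a, EndQN i p a /\ rho i a = f) <->
       coboundary2 (qact i p) (eta_rep i p f))) /\
   (forall z, cocycle2 (qact i p) z ->
      ((exists f, EndQ i p f /\
          coboundary2 (qact i p) (fun q1 q2 => eta_rep i p f q1 q2 - z q1 q2)) <->
       coboundary2 (gact i p) (infl p z)))).
Proof.
move=> exact_ip.
split; first exact: EndQN_ring.
split.
  split; first exact: EndNQ_ideal.
  by split; [exact: EndNQ_boxtimes | exact: EndNQ_boxplus].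
split.
  split=> [a|a b Ea Eb]; first exact: rho_EndQ.
  by split; [exact: rho_boxplus Ea Eb | exact: rho_boxtimes Ea Eb].
split; first exact: rho_eq0.
split; first exact: eta_cocycle.
by split=> [f|z]; [exact: rho_image | exact: infl_image].
Qed.
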